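(* Let $Q_k$ be a $K$-subset system. For every non-limit ordinal $\alpha$, every $\alpha^k$-special $T_0$ space is irreducible.
   Context: For a $K$-subset system $Q_k$ (an assignment $X\mapsto Q_k(X)$ with $\{\uparrow x\}\subseteq Q_k(X)\subseteq Q(X)$, the nonempty compact saturated sets, such that continuous images of $k$-Rudin sets are $k$-Rudin), a nonempty $A\subseteq X$ is $k$-Rudin if for some filtered $\mathcal K\subseteq Q_k(X)$, $\overline A$ is a minimal closed set meeting every member of $\mathcal K$. $K(X)$ is the set of classes of $k$-Rudin sets under $A\sim B\iff\overline A=\overline B$, with open sets $U^*=\{[A]\mid A\cap U\ne\emptyset\}$; $X$ embeds via $x\mapsto[\{x\}]$. $K_0(X)=X$, $K_{\beta+1}(X)=K(K_\beta(X))$, $K_\beta(X)=\bigcup_{\gamma<\beta}K_\gamma(X)$ for limit $\beta$. $\mathrm{rank}_k(X)$ is the least $\alpha$ with $K_\alpha(X)\cong K_{\alpha+1}(X)$. $X$ is $\alpha^k$-special if $\mathrm{rank}_k(X)=\alpha$ and $\alpha$ is the least ordinal for which $K_\alpha(X)$ has a greatest element in its specialization order. A space is irreducible if it is nonempty and not the union of two proper closed subsets. *)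

(* point-set topology written from scratch (spaces are built
   on the fly by the K-construction, so a light-weight record is used). *)
From Stdlib Require Import List.

Set Implicit Arguments.

Record Space := mkSpace { pt :> Type; isOpen : (pt -> Prop) -> Prop }.

Section Topology.
Context {X : Space}.

Definition is_topology : Prop :=
  isOpen X (fun _ => True) /\
  (forall U V, isOpen X U -> isOpen X V -> isOpen X (fun x => U x /\ V x)) /\
  (forall F : (X -> Prop) -> Prop, (forall U, F U -> isOpen X U) ->
     isOpen X (fun x => exists U, F U /\ U x)).

Definition subset (A B : X -> Prop) : Prop := forall x, A x -> B x.
Definition meets (A B : X -> Prop) : Prop := exists x, A x /\ B x.

Definition closed (C : X -> Prop) : Prop := isOpen X (fun x => ~ C x).

Definition closure (A : X -> Prop) : X -> Prop :=
  fun x => forall C, closed C -> subset A C -> C x.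

Definition spec_le (x y : X) : Prop := closure (fun z => z = y) x.

Definition up (x : X) : X -> Prop := fun y => spec_le x y.

Definition saturated (A : X -> Prop) : Prop :=
  forall x, (forall U, isOpen X U -> subset A U -> U x) -> A x.

Definition compact (A : X -> Prop) : Prop :=
  forall F : (X -> Prop) -> Prop, (forall U, F U -> isOpen X U) ->
    subset A (fun x => exists U, F U /\ U x) ->
    exists l : list (X -> Prop), (forall U, In U l -> F U) /\
      subset A (fun x => exists U, In U l /\ U x).

Definition in_Q (A : X -> Prop) : Prop :=
  (exists x, A x) /\ compact A /\ saturated A.

Definition filtered (KK : (X -> Prop) -> Prop) : Prop :=
  (exists K, KK K) /\
  forall K1 K2, KK K1 -> KK K2 -> exists K3, KK K3 /\ subset K3 K1 /\ subset K3 K2.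

Definition min_closed_meeting (KK : (X -> Prop) -> Prop) (C : X -> Prop) : Prop :=
  closed C /\ (forall K, KK K -> meets C K) /\
  forall B, closed B -> subset B C -> (forall K, KK K -> meets B K) -> subset C B.

Definition has_greatest : Prop := exists t : X, forall x, spec_le x t.

Definition T0 : Prop :=
  forall x y : X, (forall U, isOpen X U -> (U x <-> U y)) -> x = y.

Definition irreducible : Prop :=
  (exists x : X, True) /\
  forall C1 C2, closed C1 -> closed C2 -> (forall x, C1 x \/ C2 x) ->
    (forall x, C1 x) \/ (forall x, C2 x).

End Topology.
Arguments is_topology X : clear implicits.
Arguments has_greatest X : clear implicits.
Arguments T0 X : clear implicits.
Arguments irreducible X : clear implicits.

Definition continuous {X Y : Space} (f : X -> Y) : Prop :=
  forall V, isOpen Y V -> isOpen X (fun x => V (f x)).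

Definition image {X Y : Space} (f : X -> Y) (A : X -> Prop) : Y -> Prop :=
  fun y => exists x, A x /\ f x = y.

Definition homeo {X Y : Space} (f : X -> Y) : Prop :=
  exists g : Y -> X, (forall x, g (f x) = x) /\ (forall y, f (g y) = y) /\
    continuous f /\ continuous g.

Definition homeomorphic (X Y : Space) : Prop := exists f : X -> Y, homeo f.

Definition subset_assignment := forall X : Space, (X -> Prop) -> Prop.

Definition k_rudin (Qk : subset_assignment) (X : Space) (A : X -> Prop) : Prop :=
  (exists x, A x) /\
  exists KK : (X -> Prop) -> Prop,
    (forall K, KK K -> Qk X K) /\ filtered KK /\
    min_closed_meeting KK (closure A).

Record KSubsetSystem := {
  Qk : subset_assignment;
  Qk_up : forall X : Space, is_topology X -> forall x : X, Qk X (up x);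
  Qk_in_Q : forall X : Space, is_topology X -> forall A, Qk X A -> in_Q A;
  Qk_image : forall (X Y : Space) (f : X -> Y), is_topology X -> is_topology Y ->
    continuous f -> forall A, k_rudin Qk X A -> k_rudin Qk Y (image f A)
}.

(** K(X): a class [A] of k-Rudin sets is represented by the common closure
    cl(A); the open sets are the U^* = {[A] | A meets U} = {[A] | cl A meets U}. *)
Definition Kcarrier (Q : KSubsetSystem) (X : Space) : Type :=
  { C : X -> Prop | exists A, k_rudin (Qk Q) X A /\ forall x, C x <-> closure A x }.

Definition KSpace (Q : KSubsetSystem) (X : Space) : Space :=
  @mkSpace (Kcarrier Q X)
    (fun V => exists U, isOpen X U /\
       forall c : Kcarrier Q X, V c <-> meets (proj1_sig c) U).

(** Ordinals: an ordinal is an element of a well-ordered type. *)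
Definition well_order (W : Type) (lt : W -> W -> Prop) : Prop :=
  well_founded lt /\ (forall a b c, lt a b -> lt b c -> lt a c) /\
  (forall a b, lt a b \/ a = b \/ lt b a).

Definition le_of (W : Type) (lt : W -> W -> Prop) (a b : W) : Prop := lt a b \/ a = b.

Definition is_least (W : Type) (lt : W -> W -> Prop) (w : W) : Prop :=
  forall v, ~ lt v w.

Definition is_succ_of (W : Type) (lt : W -> W -> Prop) (p w : W) : Prop :=
  lt p w /\ forall v, lt v w -> le_of lt v p.

Definition is_limit (W : Type) (lt : W -> W -> Prop) (w : W) : Prop :=
  ~ is_least lt w /\ ~ (exists p, is_succ_of lt p w).

Definition non_limit (W : Type) (lt : W -> W -> Prop) (w : W) : Prop :=
  is_least lt w \/ exists p, is_succ_of lt p w.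

(** The transfinite tower K_w(X) (w ranging over the well-order W), together
    with the canonical embeddings e v w : K_v(X) -> K_w(X) (v <= w), specified
    up to compatible homeomorphism:
    - K_0(X) = X,
    - K_{p+1}(X) = K(K_p(X)) with e p (p+1) the embedding x |-> [{x}],
    - at limits, K_w(X) is the union (direct limit) of the K_v(X), v < w,
      with the final (union) topology. *)
Definition is_K_tower (Q : KSubsetSystem) (W : Type) (lt : W -> W -> Prop)
    (X : Space) (S : W -> Space) (e : forall v w : W, S v -> S w) : Prop :=
  (forall w (x : S w), e w w x = x) /\
  (forall u v w (x : S u), le_of lt u v -> le_of lt v w ->
      e u w x = e v w (e u v x)) /\
  (forall w, is_least lt w -> homeomorphic X (S w)) /\
  (forall p w, is_succ_of lt p w ->
     exists psi : KSpace Q (S p) -> S w, homeo psi /\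
       forall (x : S p) (c : KSpace Q (S p)),
         (forall y, proj1_sig c y <-> closure (fun z => z = x) y) ->
         e p w x = psi c) /\
  (forall w, is_limit lt w ->
     (forall y : S w, exists v (x : S v), lt v w /\ e v w x = y) /\
     (forall v v' (x : S v) (y : S v'), lt v w -> lt v' w ->
        (e v w x = e v' w y <->
         exists u, lt u w /\ le_of lt v u /\ le_of lt v' u /\ e v u x = e v' u y)) /\
     (forall U : S w -> Prop,
        isOpen (S w) U <-> forall v, lt v w -> isOpen (S v) (fun x => U (e v w x)))).

(** X is alpha^k-special: rank_k(X) = alpha (alpha is least with
    K_alpha(X) homeomorphic to K_{alpha+1}(X) = K(K_alpha(X))), and alpha is
    least such that K_alpha(X) has a greatest element. *)
Definition is_special (Q : KSubsetSystem) (W : Type) (lt : W -> W -> Prop)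
    (S : W -> Space) (alpha : W) : Prop :=
  homeomorphic (S alpha) (KSpace Q (S alpha)) /\
  (forall g, lt g alpha -> ~ homeomorphic (S g) (KSpace Q (S g))) /\
  has_greatest (S alpha) /\
  (forall g, lt g alpha -> ~ has_greatest (S g)).

From Stdlib Require Import Setoid Classical FunctionalExtensionality PropExtensionality.

(* K_alpha(X) has a greatest element t, and a space with a greatest element in
   the specialization order is irreducible (a closed set containing t is
   everything).  Irreducibility only depends on the lattice of open sets, and along the
   tower every embedding e_{0,w} : K_0(X) -> K_w(X) induces, by taking preimages, an
   isomorphism of open-set lattices: for x |-> cl{x} into K(Y) the open set
   U^* pulls back to U and is determined by it, homeomorphisms are harmless, and
   at a limit stage compatible open sets of the earlier stages glue to one open
   set of the union. *)

Set Implicit Arguments.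
Unset Strict Implicit.

Lemma pred_ext {T : Type} (P P' : T -> Prop) : (forall x, P x <-> P' x) -> P = P'.
Proof.
  intro H; apply functional_extensionality; intro x; apply propositional_extensionality; auto.
Qed.

Lemma isOpen_ext (X : Space) (U V : X -> Prop) :
  (forall x, U x <-> V x) -> isOpen X U -> isOpen X V.
Proof. intro H; rewrite (pred_ext H); auto. Qed.

Lemma meets_ext (X : Space) (C U V : X -> Prop) :
  (forall x, U x <-> V x) -> (meets C U <-> meets C V).
Proof. intro H; rewrite (pred_ext H); reflexivity. Qed.

Section OpenAndClosed.
Variable X : Space.
Hypothesis HX : is_topology X.

Lemma open_empty : isOpen X (fun _ => False).
Proof.
  apply isOpen_ext with (fun x => exists U, (fun _ : X -> Prop => False) U /\ U x).
  - intro x; split; [intros [U [[] _]] | intros []].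
  - apply (proj2 (proj2 HX)); intros U [].
Qed.

Lemma open_or (U V : X -> Prop) : isOpen X U -> isOpen X V -> isOpen X (fun x => U x \/ V x).
Proof.
  intros HU HV.
  apply isOpen_ext with (fun x => exists U', (U' = U \/ U' = V) /\ U' x).
  - intro x; split.
    + intros [U' [[-> | ->] U'x]]; auto.
    + intros [Ux | Vx]; [exists U | exists V]; auto.
  - apply (proj2 (proj2 HX)); intros U' [-> | ->]; auto.
Qed.

Lemma closed_compl (U : X -> Prop) : isOpen X U -> closed (fun x => ~ U x).
Proof.
  intro HU; apply isOpen_ext with U; [|exact HU]. intro x; split; [auto | apply NNPP].
Qed.

Lemma closed_diff (C U : X -> Prop) :
  closed C -> isOpen X U -> closed (fun x => C x /\ ~ U x).
Proof.
  intros HC HU. apply isOpen_ext with (fun x => ~ C x \/ U x); [|exact (open_or HC HU)].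
  intro x; split; [tauto|]. intro H; destruct (classic (U x)); tauto.
Qed.

Lemma subset_closure (A : X -> Prop) : subset A (closure A).
Proof. intros x Ax C _ HAC; auto. Qed.

Lemma closure_min (A C : X -> Prop) : closed C -> subset A C -> subset (closure A) C.
Proof. intros HC HAC x Hx; apply Hx; auto. Qed.

Lemma closed_closure (A : X -> Prop) : closed (closure A).
Proof.
  unfold closed.
  apply isOpen_ext with
    (fun x => exists U, (exists C, closed C /\ subset A C /\ U = (fun y => ~ C y)) /\ U x).
  - intro x; split.
    + intros [U [[C [HC [HAC ->]]] Cx]] Hx. apply Cx, Hx; auto.
    + intro Hx. apply not_all_ex_not in Hx as [C HC].
      apply imply_to_and in HC as [HCc HC]. apply imply_to_and in HC as [HAC Cx].
      exists (fun y => ~ C y); split; [exists C; auto | exact Cx].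
  - apply (proj2 (proj2 HX)). intros U [C [HC [_ ->]]]. exact HC.
Qed.

Lemma meets_closure_point (x : X) (U : X -> Prop) :
  isOpen X U -> (meets (closure (fun z => z = x)) U <-> U x).
Proof.
  intro HU; split.
  - intros [y [Hy Uy]]. apply NNPP; intro Ux.
    apply (Hy _ (closed_compl HU)); [intros z ->; exact Ux | exact Uy].
  - intro Ux; exists x; split; [apply subset_closure; reflexivity | exact Ux].
Qed.

Lemma has_greatest_irreducible : has_greatest X -> irreducible X.
Proof.
  intros [t Ht]. split; [exists t; exact I|].
  intros C1 C2 H1 H2 Hcover.
  destruct (Hcover t) as [Ct | Ct]; [left | right]; intro x;
    apply (Ht x); auto; intros z ->; exact Ct.
Qed.

Lemma min_closed_meeting_open (KK : (X -> Prop) -> Prop) (C U : X -> Prop) :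
  min_closed_meeting KK C -> isOpen X U -> meets C U ->
  exists K, KK K /\ forall x, C x -> K x -> U x.
Proof.
  intros [HC [_ Hmin]] HU [y [Cy Uy]]. apply NNPP; intro Hno.
  assert (Hmeet : forall K, KK K -> meets (fun x => C x /\ ~ U x) K).
  { intros K HK. apply NNPP; intro Hn. apply Hno; exists K; split; [exact HK|].
    intros x Cx Kx. apply NNPP; intro Ux. apply Hn; exists x; auto. }
  destruct (Hmin _ (closed_diff HC HU) (fun x Hx => proj1 Hx) Hmeet y Cy). contradiction.
Qed.

(* Such a C is irreducible; this is what makes U |-> U^* preserve binary intersections. *)
Lemma min_closed_meeting_and (KK : (X -> Prop) -> Prop) (C U1 U2 : X -> Prop) :
  filtered KK -> min_closed_meeting KK C -> isOpen X U1 -> isOpen X U2 ->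
  meets C U1 -> meets C U2 -> meets C (fun x => U1 x /\ U2 x).
Proof.
  intros [_ Hfilt] HCmin HU1 HU2 M1 M2.
  destruct (min_closed_meeting_open HCmin HU1 M1) as [K1 [HK1 E1]].
  destruct (min_closed_meeting_open HCmin HU2 M2) as [K2 [HK2 E2]].
  destruct (Hfilt K1 K2 HK1 HK2) as [K3 [HK3 [S1 S2]]].
  destruct (proj1 (proj2 HCmin) K3 HK3) as [z [Cz K3z]].
  exists z; auto.
Qed.

End OpenAndClosed.

Section KSpace.
Variables (Q : KSubsetSystem) (X : Space).
Hypothesis HX : is_topology X.

Lemma k_rudin_point (x : X) : k_rudin (Qk Q) X (fun z => z = x).
Proof.
  split; [exists x; reflexivity|].
  exists (fun K => K = up x). split; [intros K ->; exact (Qk_up Q HX x)|]. split.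
  - split; [exists (up x); reflexivity|].
    intros K1 K2 -> ->. exists (up x); split; [reflexivity | split; intros y; auto].
  - split; [exact (closed_closure HX _)|]. split.
    + intros K ->. exists x; split; apply subset_closure; reflexivity.
    + intros B HB _ HmeetB. destruct (HmeetB (up x) eq_refl) as [y [By xy]].
      apply closure_min; [exact HB|]. intros z ->.
      apply xy; [exact HB | intros z ->; exact By].
Qed.

Lemma Kpoint_meets_and (c : Kcarrier Q X) (U1 U2 : X -> Prop) :
  isOpen X U1 -> isOpen X U2 -> meets (proj1_sig c) U1 -> meets (proj1_sig c) U2 ->
  meets (proj1_sig c) (fun x => U1 x /\ U2 x).
Proof.
  destruct c as [C HC]; simpl. destruct HC as [A [[_ [KK [_ [Hfilt Hmin]]]] HC]].
  rewrite (pred_ext HC). exact (min_closed_meeting_and HX Hfilt Hmin).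
Qed.

Lemma K_topology : is_topology (KSpace Q X).
Proof.
  destruct HX as [Htrue [_ Hunion]]. split; [|split]; simpl.
  - exists (fun _ => True); split; [exact Htrue|].
    intro c; split; [|auto]. intros _.
    destruct c as [C HC]; simpl. destruct HC as [A [[[x Ax] _] HC]].
    exists x; split; [apply HC, subset_closure, Ax | exact I].
  - intros V1 V2 [U1 [HU1 E1]] [U2 [HU2 E2]].
    exists (fun x => U1 x /\ U2 x); split; [exact (proj1 (proj2 HX) _ _ HU1 HU2)|].
    intro c; rewrite E1, E2; split.
    + intros [M1 M2]; exact (Kpoint_meets_and HU1 HU2 M1 M2).
    + intros [y [cy [U1y U2y]]]; split; exists y; auto.
  - intros F HF.
    exists (fun x => exists U, (isOpen X U /\ exists V, F V /\
              forall c : Kcarrier Q X, V c <-> meets (proj1_sig c) U) /\ U x).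
    split; [apply Hunion; intros U [HU _]; exact HU|].
    intro c; split.
    + intros [V [FV Vc]]. destruct (HF V FV) as [U [HU EV]].
      destruct (proj1 (EV c) Vc) as [y [cy Uy]].
      exists y; split; [exact cy|]. exists U; split; eauto.
    + intros [y [cy [U [[HU [V [FV EV]]] Uy]]]].
      exists V; split; [exact FV|]. apply EV; exists y; auto.
Qed.

Definition Kunit (x : X) : KSpace Q X :=
  exist _ (closure (fun z => z = x)) (ex_intro _ _ (conj (k_rudin_point x) (fun y => iff_refl _))).

Lemma Kunit_continuous : continuous Kunit.
Proof.
  intros V [U [HU EV]]. apply isOpen_ext with U; [|exact HU].
  intro x; rewrite EV; symmetry; exact (meets_closure_point x HU).
Qed.

End KSpace.

Definition continuous_comp (X Y Z : Space) (f : X -> Y) (g : Y -> Z) :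
  continuous f -> continuous g -> continuous (fun x => g (f x)) :=
  fun cf cg V HV => cf _ (cg V HV).

Lemma final_topology (Y : Space) (I : Type) (P : I -> Prop) (T : I -> Space)
    (f : forall i, T i -> Y) :
  (forall i, P i -> is_topology (T i)) ->
  (forall U, isOpen Y U <-> forall i, P i -> isOpen (T i) (fun x => U (f i x))) ->
  is_topology Y.
Proof.
  intros HT Hopen. split; [|split].
  - apply Hopen; intros i hi; exact (proj1 (HT i hi)).
  - intros U V HU HV. apply Hopen; intros i hi.
    apply (proj1 (proj2 (HT i hi))); [apply (proj1 (Hopen U) HU) | apply (proj1 (Hopen V) HV)];
      exact hi.
  - intros F HF. apply Hopen; intros i hi.
    apply isOpen_ext with
      (fun x => exists U', (exists U, F U /\ U' = (fun x => U (f i x))) /\ U' x).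
    + intro x; split.
      * intros [U' [[U [FU ->]] HU]]; exists U; auto.
      * intros [U [FU Ux]]; exists (fun x => U (f i x)); split; [exists U; auto | exact Ux].
    + apply (proj2 (proj2 (HT i hi))).
      intros U' [U [FU ->]]. exact (proj1 (Hopen U) (HF U FU) i hi).
Qed.

Lemma homeo_continuous (X Y : Space) (f : X -> Y) : homeo f -> continuous f.
Proof. intros [g [_ [_ [cf _]]]]; exact cf. Qed.

Lemma homeo_isOpen (X Y : Space) (f : X -> Y) :
  homeo f -> forall V, isOpen Y V <-> isOpen X (fun x => V (f x)).
Proof.
  intros [g [gf [fg [cf cg]]]] V; split; [exact (cf V)|].
  intro HV. apply isOpen_ext with (fun y => V (f (g y))); [|exact (cg _ HV)].
  intro y; rewrite fg; reflexivity.
Qed.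

Lemma homeo_topology (X Y : Space) (f : X -> Y) : homeo f -> is_topology X -> is_topology Y.
Proof.
  intros hf HX.
  apply (@final_topology Y unit (fun _ => True) (fun _ => X) (fun _ => f)); [auto|].
  intro V; rewrite (homeo_isOpen hf V); split; [auto | intro H; exact (H tt I)].
Qed.

Section TraceBijective.
Variables Y Z : Space.

Definition has_trace (f : Y -> Z) (V : Z -> Prop) (U : Y -> Prop) : Prop :=
  forall x, V (f x) <-> U x.

Definition trace_surjective (f : Y -> Z) : Prop :=
  forall U, isOpen Y U -> exists V, isOpen Z V /\ has_trace f V U.

Definition trace_injective (f : Y -> Z) : Prop :=
  forall V V' U, isOpen Z V -> isOpen Z V' -> has_trace f V U -> has_trace f V' U ->
    forall z, V z <-> V' z.

(* For continuous f: V |-> f^-1(V) is an isomorphism of the lattices of open sets. *)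
Definition trace_bijective (f : Y -> Z) : Prop := trace_surjective f /\ trace_injective f.

Lemma homeo_trace_bijective (f : Y -> Z) : homeo f -> trace_bijective f.
Proof.
  intros [g [gf [fg [cf cg]]]]. split.
  - intros U HU. exists (fun z => U (g z)); split; [exact (cg U HU)|].
    intro x; rewrite gf; reflexivity.
  - intros V V' U _ _ tV tV' z. rewrite <- (fg z), (tV (g z)), (tV' (g z)). reflexivity.
Qed.

Lemma irreducible_trace_bijective (f : Y -> Z) :
  is_topology Z -> trace_bijective f -> irreducible Z -> irreducible Y.
Proof.
  intros HZ [Hsurj Hinj] [[z _] Hirr].
  assert (Hempty : forall V, isOpen Z V -> has_trace f V (fun _ => False) -> forall t, ~ V t).
  { intros V HV tV t. exact (proj1 (Hinj V _ _ HV (open_empty HZ) tV (fun _ => iff_refl _) t)). }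
  split.
  - apply NNPP; intro Hne. refine (Hempty (fun _ => True) (proj1 HZ) _ z I).
    intro y; exfalso; apply Hne; exists y; exact I.
  - intros C1 C2 H1 H2 Hcover.
    destruct (Hsurj _ H1) as [V1 [HV1 t1]]. destruct (Hsurj _ H2) as [V2 [HV2 t2]].
    assert (Hdisj : forall t, ~ (V1 t /\ V2 t)).
    { apply Hempty; [exact (proj1 (proj2 HZ) _ _ HV1 HV2)|].
      intro x; simpl; rewrite (t1 x), (t2 x). destruct (Hcover x); tauto. }
    destruct (Hirr (fun t => ~ V1 t) (fun t => ~ V2 t)) as [H | H].
    + exact (closed_compl HV1).
    + exact (closed_compl HV2).
    + intro t. destruct (classic (V1 t)); [right; intro; apply (Hdisj t) | left]; auto.
    + left; intro x. apply NNPP; intro Hx. apply (H (f x)), t1, Hx.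
    + right; intro x. apply NNPP; intro Hx. apply (H (f x)), t2, Hx.
Qed.

End TraceBijective.

Lemma Kunit_trace_bijective (Q : KSubsetSystem) (Y : Space) (HY : is_topology Y) :
  trace_bijective (Kunit Q HY).
Proof.
  split.
  - intros U HU. exists (fun c => meets (proj1_sig c) U).
    split; [exists U; split; [exact HU | reflexivity]|].
    intro x; exact (meets_closure_point x HU).
  - intros V V' U [U1 [HU1 E1]] [U2 [HU2 E2]] tV tV' c.
    assert (HU12 : forall x, U1 x <-> U2 x).
    { intro x. rewrite <- (meets_closure_point x HU1), <- (meets_closure_point x HU2).
      exact (iff_trans (iff_trans (iff_sym (E1 _)) (tV x)) (iff_trans (iff_sym (tV' x)) (E2 _))). }
    rewrite E1, E2. exact (meets_ext _ HU12).
Qed.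

Lemma trace_bijective_id (Y : Space) : trace_bijective (fun y : Y => y).
Proof.
  split.
  - intros U HU; exists U; split; [exact HU | intro; reflexivity].
  - intros V V' U _ _ tV tV' z. exact (iff_trans (tV z) (iff_sym (tV' z))).
Qed.

Lemma trace_bijective_comp (X Y Z : Space) (f : X -> Y) (g : Y -> Z) :
  continuous g -> trace_bijective f -> trace_bijective g ->
  trace_bijective (fun x => g (f x)).
Proof.
  intros cg [sf jf] [sg jg]. split.
  - intros U HU. destruct (sf U HU) as [V [HV tV]]. destruct (sg V HV) as [V' [HV' tV']].
    exists V'; split; [exact HV'|]. intro x; rewrite (tV' (f x)); apply tV.
  - intros V V' U HV HV' tV tV'.
    apply (jg V V' (fun y => V (g y))); [exact HV | exact HV' | intro; reflexivity|].
    exact (jf _ _ U (cg _ HV') (cg _ HV) tV' tV).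
Qed.

Section Tower.
Variables (Q : KSubsetSystem) (W : Type) (lt : W -> W -> Prop) (X : Space)
  (S : W -> Space) (e : forall v w : W, S v -> S w).
Arguments e : clear implicits.
Hypotheses (Hwo : well_order lt) (Htower : is_K_tower Q lt X S e) (HX : is_topology X).

Lemma ordinal_cases (w : W) :
  is_least lt w \/ (exists p, is_succ_of lt p w) \/ is_limit lt w.
Proof.
  destruct (classic (is_least lt w)); [left; auto|].
  destruct (classic (exists p, is_succ_of lt p w)); [right; left; auto|].
  right; right; split; auto.
Qed.

Lemma exists_least (a : W) : exists z, is_least lt z.
Proof.
  induction (proj1 Hwo a) as [a _ IH].
  destruct (classic (is_least lt a)) as [h | h]; [eauto|].
  apply not_all_ex_not in h as [v hv]. apply NNPP in hv. eauto.
Qed.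

Lemma least_unique (z w : W) : is_least lt z -> is_least lt w -> z = w.
Proof.
  intros hz hw. destruct (proj2 (proj2 Hwo) z w) as [h | [h | h]];
    [destruct (hw _ h) | exact h | destruct (hz _ h)].
Qed.

Lemma least_le (z v : W) : is_least lt z -> le_of lt z v.
Proof.
  intro hz. destruct (proj2 (proj2 Hwo) z v) as [h | [h | h]];
    [left | right | destruct (hz _ h)]; exact h.
Qed.

Lemma least_lt_limit (z w : W) : is_least lt z -> is_limit lt w -> lt z w.
Proof.
  intros hz hw. destruct (least_le w hz) as [h | <-]; [exact h | destruct (proj1 hw hz)].
Qed.

Lemma tower_comp (u v w : W) (x : S u) :
  le_of lt u v -> le_of lt v w -> e u w x = e v w (e u v x).
Proof. exact (proj1 (proj2 Htower) u v w x). Qed.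

Lemma tower_topology (w : W) : is_topology (S w).
Proof.
  destruct Htower as [_ [_ [Hleast [Hsucc Hlimit]]]].
  induction w as [w IH] using (well_founded_ind (proj1 Hwo)).
  destruct (ordinal_cases w) as [h | [[p h] | h]].
  - destruct (Hleast w h) as [f hf]. exact (homeo_topology hf HX).
  - destruct (Hsucc p w h) as [psi [hpsi _]].
    exact (homeo_topology hpsi (K_topology Q (IH p (proj1 h)))).
  - exact (final_topology IH (proj2 (proj2 (Hlimit w h)))).
Qed.

Lemma tower_succ_factor (p w : W) : is_succ_of lt p w ->
  exists psi : KSpace Q (S p) -> S w,
    homeo psi /\ e p w = fun x => psi (Kunit Q (tower_topology p) x).
Proof.
  intro h. destruct (proj1 (proj2 (proj2 (proj2 Htower))) p w h) as [psi [hpsi Hee]].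
  exists psi; split; [exact hpsi|].
  apply functional_extensionality; intro x; apply Hee; intro; reflexivity.
Qed.

Lemma tower_continuous (w v : W) : le_of lt v w -> continuous (e v w).
Proof.
  induction w as [w IH] using (well_founded_ind (proj1 Hwo)).
  intros [hv | <-].
  2:{ intros V HV. apply isOpen_ext with V; [|exact HV].
      intro x; rewrite (proj1 Htower); reflexivity. }
  destruct (ordinal_cases w) as [h | [[p h] | h]].
  - destruct (h _ hv).
  - destruct (tower_succ_factor h) as [psi [hpsi Hpw]].
    assert (Hvp : le_of lt v p) by exact (proj2 h v hv).
    intros V HV. apply isOpen_ext with (fun x => V (e p w (e v p x))).
    + intro x; rewrite <- (tower_comp x Hvp (or_introl (proj1 h))); reflexivity.
    + rewrite Hpw.
      exact (continuous_comp (IH p (proj1 h) Hvp)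
               (continuous_comp (Kunit_continuous (Q:=Q) (tower_topology p)) (homeo_continuous hpsi)) HV).
  - destruct Htower as [_ [_ [_ [_ Hlimit]]]].
    intros V HV. exact (proj1 (proj2 (proj2 (Hlimit w h)) V) HV v hv).
Qed.

Section FromLeast.
Variable z : W.
Hypothesis hz : is_least lt z.

Lemma has_trace_tower (v u : W) (V : S u -> Prop) (U : S z -> Prop) :
  le_of lt v u -> has_trace (e z u) V U -> has_trace (e z v) (fun x => V (e v u x)) U.
Proof. intros hvu tV x. rewrite <- (tower_comp x (least_le v hz) hvu). exact (tV x). Qed.

Section Limit.
Variable w : W.
Hypothesis hw : is_limit lt w.
Hypothesis IH : forall v, lt v w -> trace_bijective (e z v).

Lemma tower_limit_trace_injective : trace_injective (e z w).
Proof.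
  intros V V' U HV HV' tV tV' y.
  destruct (proj2 (proj2 (proj2 (proj2 Htower))) w hw) as [Hcover [_ Hopen]].
  destruct (Hcover y) as [v [x [hv <-]]].
  apply (proj2 (IH hv) (fun t => V (e v w t)) (fun t => V' (e v w t)) U).
  - exact (proj1 (Hopen V) HV v hv).
  - exact (proj1 (Hopen V') HV' v hv).
  - exact (has_trace_tower (or_introl hv) tV).
  - exact (has_trace_tower (or_introl hv) tV').
Qed.

(* The open set of the union is glued from the opens with trace U at each earlier stage;
   any two of them are restrictions of one such open at a common later stage. *)
Lemma tower_limit_trace_surjective : trace_surjective (e z w).
Proof.
  intros U HU.
  destruct (proj2 (proj2 (proj2 (proj2 Htower))) w hw) as [_ [Heq Hopen]].
  set (V := fun y => exists v (x : S v) Uv, lt v w /\ e v w x = y /\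
              isOpen (S v) Uv /\ has_trace (e z v) Uv U /\ Uv x).
  assert (HV : forall v Uv, lt v w -> isOpen (S v) Uv -> has_trace (e z v) Uv U ->
                 forall x, V (e v w x) <-> Uv x).
  { intros v Uv hv HUv tUv x. split.
    - intros [v' [x' [Uv' [hv' [Hx' [HUv' [tUv' Uv'x']]]]]]].
      destruct (proj1 (Heq v' v x' x hv' hv) Hx') as [u [hu [hv'u [hvu Hxu]]]].
      destruct (proj1 (IH hu) U HU) as [Uu [HUu tUu]].
      apply (proj1 (proj2 (IH hv) _ Uv U (tower_continuous hvu HUu) HUv
                      (has_trace_tower hvu tUu) tUv x)).
      rewrite <- Hxu.
      exact (proj1 (proj2 (IH hv') Uv' _ U HUv' (tower_continuous hv'u HUu)
                      tUv' (has_trace_tower hv'u tUu) x') Uv'x').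
    - intro Uvx. exists v, x, Uv; auto. }
  exists V; split.
  - apply Hopen; intros v hv. destruct (proj1 (IH hv) U HU) as [Uv [HUv tUv]].
    apply isOpen_ext with Uv; [|exact HUv]. intro x; symmetry; exact (HV v Uv hv HUv tUv x).
  - refine (HV z U (least_lt_limit hz hw) HU _).
    intro x; rewrite (proj1 Htower); reflexivity.
Qed.

End Limit.

Lemma tower_trace_bijective (w : W) : trace_bijective (e z w).
Proof.
  induction w as [w IH] using (well_founded_ind (proj1 Hwo)).
  destruct (ordinal_cases w) as [h | [[p h] | h]].
  - destruct (least_unique hz h).
    replace (e z z) with (fun x : S z => x); [exact (trace_bijective_id _)|].
    apply functional_extensionality; intro x; symmetry; exact (proj1 Htower z x).
  - replace (e z w) with (fun x => e p w (e z p x)).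
    2:{ apply functional_extensionality; intro x; symmetry.
        exact (tower_comp x (least_le p hz) (or_introl (proj1 h))). }
    destruct (tower_succ_factor h) as [psi [hpsi Hpw]].
    apply trace_bijective_comp; [exact (tower_continuous (or_introl (proj1 h))) | exact (IH p (proj1 h))|].
    rewrite Hpw. apply trace_bijective_comp;
      [exact (homeo_continuous hpsi) | exact (Kunit_trace_bijective Q (tower_topology p)) | exact (homeo_trace_bijective hpsi)].
  - split; [exact (tower_limit_trace_surjective h IH) | exact (tower_limit_trace_injective h IH)].
Qed.

End FromLeast.

End Tower.

Theorem mainTheorem8 (Q : KSubsetSystem) (W : Type) (lt : W -> W -> Prop)
    (alpha : W) (X : Space) (S : W -> Space) (e : forall v w : W, S v -> S w) :
  well_order lt -> non_limit lt alpha ->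
  is_topology X -> T0 X ->
  is_K_tower Q lt X S e ->
  is_special Q lt S alpha ->
  irreducible X.
Proof.
  intros Hwo _ HX _ Htower [_ [_ [Hgreatest _]]].
  destruct (exists_least Hwo alpha) as [z hz].
  destruct (proj1 (proj2 (proj2 Htower)) z hz) as [f hf].
  pose proof (tower_topology Hwo Htower HX) as Htop.
  apply (irreducible_trace_bijective (Htop z) (homeo_trace_bijective hf)).
  apply (irreducible_trace_bijective (Htop alpha) (tower_trace_bijective Hwo Htower HX hz alpha)).
  exact (has_greatest_irreducible Hgreatest).
Qed.
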